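(* Let $\mathbb{X}=\{p_1,\dots,p_n\}\subseteq\mathbb{P}^{k-1}$ with $n\ge2$, let $L\in P_1$ vanish at no point of $\mathbb{X}$, for each $i$ let $v_i=(p_{i1},\dots,p_{ik})\in\mathbb{F}_q^k$ be the coordinate vector of $p_i$ with $L(v_i)=1$, and let $\widehat{\mathfrak{J}}_{\mathbb{X}}\subseteq P$ be the preimage of the canonical ideal $\mathfrak{J}_{R/\mathbb{F}_q[\ell]}$. Then: (a) $(\widehat{\mathfrak{J}}_{\mathbb{X}})_{2r_{\mathbb{X}}-1}=\{g\in P_{2r_{\mathbb{X}}-1}: g(v_1)+\cdots+g(v_n)=0\}$; (b) the element $\Phi_{\mathbb{X}}=\sum_{\alpha\in\mathbb{N}^k,\,|\alpha|=2r_{\mathbb{X}}-1}\Big(\sum_{i=1}^np_{i1}^{\alpha_1}\cdots p_{ik}^{\alpha_k}\Big)\pi^{[\alpha]}\in\mathcal{D}_{-(2r_{\mathbb{X}}-1)}$ (i.e. the functional $g\mapsto\sum_ig(v_i)$ on $P_{2r_{\mathbb{X}}-1}$) is nonzero and generates the Macaulay inverse system of $\widehat{\mathfrak{J}}_{\mathbb{X}}$: $(\widehat{\mathfrak{J}}_{\mathbb{X}})^\perp=P\circ\Phi_{\mathbb{X}}$.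
   Context: $P=\mathbb{F}_q[x_1,\dots,x_k]$ standard graded; $\mathbb{X}$ a set of $n$ distinct $\mathbb{F}_q$-rational points of $\mathbb{P}^{k-1}$, $I_{\mathbb{X}}$ its vanishing ideal, $R=P/I_{\mathbb{X}}$, $r_{\mathbb{X}}=\min\{i\ge0:\dim R_i=n\}$; $\ell$ the class of $L$ in $R$. With $f(p_j)=f(v_j)$, the separators are the unique $f_1,\dots,f_n\in R_{r_{\mathbb{X}}}$ with $f_i(p_j)=\delta_{ij}$, and the canonical ideal is $\mathfrak{J}_{R/\mathbb{F}_q[\ell]}=\{\sum_i\varphi(f_i)f_i:\varphi\in\mathrm{Hom}_{\mathbb{F}_q[\ell]}(R,\mathbb{F}_q[\ell])\}\subseteq R$. $\mathcal{D}=\bigoplus_{j\ge0}\mathrm{Hom}_{\mathbb{F}_q}(P_j,\mathbb{F}_q)$ with $\mathcal{D}_{-j}=\mathrm{Hom}(P_j,\mathbb{F}_q)$ and basis $\pi^{[\beta]}$ dual to the monomials, $\pi^{[\beta]}(x^\alpha)=\delta_{\alpha\beta}$. $P$ acts by contraction: for $f\in P_d$, $\psi\in\mathcal{D}_{-j}$, $(f\circ\psi)(g)=\psi(fg)$ for $g\in P_{j-d}$. For a homogeneous ideal $J$, $J^\perp=\{\psi\in\mathcal{D}:f\circ\psi=0\ \forall f\in J\}$, and $P\circ\Phi$ is the submodule generated by $\Phi$. *)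

From HB Require Import structures.
From mathcomp Require Import all_boot all_order all_algebra all_field.
From mathcomp Require Import mpoly.
Set Implicit Arguments. Unset Strict Implicit. Unset Printing Implicit Defensive.
Import GRing.Theory.
Local Open Scope ring_scope.

Section Defs.
Variables (F : finFieldType) (k n : nat).
Implicit Types (f g : {mpoly F[k]}) (v : 'I_n -> 'I_k -> F).

Definition hcomp (d : nat) f : {mpoly F[k]} := pihomog mdeg d f.

(* The homogeneous vanishing ideal I_X of the points v_1..v_n (projective
   points p_i with representatives v_i): f \in I_X iff every homogeneous
   component of f vanishes at every v_i. *)
Definition in_IX v f : Prop := forall (d : nat) (i : 'I_n), (hcomp d f).@[v i] = 0.

(* dim R_d = n, where R_d = P_d / (I_X)_d ; since (I_X)_d is the kernel of
   the evaluation map P_d -> F^n, g |-> (g(v_i))_i, dim R_d = n iff this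
   map is onto. *)
Definition dimR_full v (d : nat) : Prop :=
  forall w : 'I_n -> F, exists2 g : {mpoly F[k]}, g \is d.-homog &
    forall j, g.@[v j] = w j.

(* Evaluation of a univariate polynomial (in F[t]) at L in P:
   the isomorphism F[t] ~ F[l] composed with a lift to P. *)
Definition evalL (L : {mpoly F[k]}) (p : {poly F}) : {mpoly F[k]} :=
  \sum_(j < size p) p`_j *: L ^+ j.

(* psi : P -> F[t] represents an F[l]-linear map phi : R -> F[l]
   (composed with P ->> R, and with F[l] ~ F[t], t |-> l). *)
Definition is_FlHom v (L : {mpoly F[k]}) (psi : {mpoly F[k]} -> {poly F}) : Prop :=
  [/\ forall f g, psi (f + g) = psi f + psi g,
      forall (c : F) f, psi (c *: f) = c *: psi f,
      forall f, psi (L * f) = 'X * psi f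
    & forall f, in_IX v f -> psi f = 0].

(* The preimage in P of the canonical ideal
   { sum_i phi(f_i) f_i : phi in Hom_{F[l]}(R, F[l]) }, where sep i is a
   representative in P of the separator f_i. *)
Definition in_Jhat v (L : {mpoly F[k]}) (sep : 'I_n -> {mpoly F[k]}) g : Prop :=
  exists2 psi, is_FlHom v L psi &
    in_IX v (g - \sum_(i < n) evalL L (psi (sep i)) * sep i).

(* The divided-power / dual module D = (+)_j Hom(P_j, F), an element being
   given by its values on monomials (psi(x^beta) = coefficient of pi^[beta]),
   with finite support. *)
Definition inD (psi : 'X_{1..k} -> F) : Prop :=
  exists s : seq 'X_{1..k}, forall m, psi m != 0 -> m \in s.

(* Contraction f o psi : (f o psi)(x^beta) = psi(f x^beta). *)
Definition contract f (psi : 'X_{1..k} -> F) : 'X_{1..k} -> F :=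
  fun beta => \sum_(a <- msupp f) f@_a * psi (a + beta)%MM.

Definition PhiX v (d : nat) : 'X_{1..k} -> F :=
  fun alpha => if mdeg alpha == d then \sum_(i < n) ('X_[alpha]).@[v i] else 0.

End Defs.

From HB Require Import structures.
From mathcomp Require Import all_boot all_order all_algebra all_field.
From mathcomp Require Import mpoly zify.
From mathcomp Require ssrcomplements.
From Stdlib Require Import Lia.
Set Implicit Arguments. Unset Strict Implicit. Unset Printing Implicit Defensive.
Import GRing.Theory.
Local Open Scope ring_scope.

(* Restricting a polynomial to the line through a point, f |-> f(t v_i), turns
   I_X into the common kernel of these restrictions and F[l]-linear maps into
   F[t]-linear ones, since L restricts to t.  Then g lies in the preimage of the
   canonical ideal iff g(t v_i) = psi(sep_i) t^r for one F[l]-linear psi.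
   Applying psi to the r-form L^(r-d) u, for a d-form u with d < r, shows that
   the coefficients of t^(r-1-d) of the psi(sep_i), weighted by u(v_i), sum to
   zero; conversely, maps psi that drop low-order coefficients of f(t v_i)
   produce every e-form, e >= 2r - s, whose values are orthogonal to all
   (s-1)-forms.  With s = 1 this is (a).  For (b), the first fact makes
   g |-> sum_i g_(2r-1)(v_i) vanish on J-hat times P, and the second shows that
   a functional killing J-hat vanishes in degrees >= 2r and, in each degree
   j < 2r, is evaluation against the values of a (2r-1-j)-form, by linear
   duality; the sum of these forms contracts Phi_X to the functional. *)

Lemma sum_enum_val (F : fieldType) (T : finType) (f : T -> F) :
  \sum_t f t = \sum_(b < #|T|) f (enum_val b).
Proof.
rewrite (reindex enum_rank); last exact/onW_bij/enum_rank_bij.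
by apply: eq_bigr => t _; rewrite enum_rankK.
Qed.

Lemma lin_comb_of_ker_orth (F : fieldType) (I J : finType)
    (A : I -> J -> F) (u : J -> F) :
  (forall c : J -> F, (forall i, \sum_j A i j * c j = 0) -> \sum_j u j * c j = 0) ->
  exists w : I -> F, forall j, u j = \sum_i w i * A i j.
Proof.
move=> orth_u.
pose M := \matrix_(a < #|I|, b < #|J|) A (enum_val a) (enum_val b).
pose U := \row_(b < #|J|) u (enum_val b).
have /submxP [W defU] : (U <= M)%MS.
  rewrite submxE; apply/eqP/rowP => l; rewrite !mxE.
  transitivity (\sum_j u j * cokermx M (enum_rank j) l).
    by rewrite [RHS]sum_enum_val; apply: eq_bigr => b _; rewrite mxE enum_valK.
  apply: orth_u => i.
  transitivity ((M *m cokermx M) (enum_rank i) l); last by rewrite mulmx_coker mxE.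
  rewrite mxE [LHS]sum_enum_val.
  by apply: eq_bigr => b _; rewrite !mxE enum_rankK enum_valK.
exists (fun i => W 0 (enum_rank i)) => j.
have /matrixP/(_ 0 (enum_rank j)) := defU; rewrite !mxE enum_rankK => ->.
by rewrite [RHS]sum_enum_val; apply: eq_bigr => a _; rewrite !mxE enum_valK enum_rankK.
Qed.

Section Restriction.
Variables (F : fieldType) (k : nat).
Implicit Types (w : 'I_k -> F) (f p : {mpoly F[k]}).

(* [restr w f] is f(t w) in F[t]; its coefficient of t^d is the degree-d
   component of f evaluated at w (coef_restr). *)
Definition restr w f : {poly F} := mmap (@polyC F) (fun j => (w j)%:P * 'X) f.

HB.instance Definition _ w :=
  GRing.RMorphism.copy (restr w) (mmap (@polyC F) (fun j => (w j)%:P * 'X)).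

Lemma restrZ w c f : restr w (c *: f) = c *: restr w f.
Proof. by rewrite /restr mmapZ mul_polyC. Qed.

Lemma restrE w f :
  restr w f = \sum_(m <- msupp f) (f@_m * ('X_[m]).@[w]) *: 'X^(mdeg m).
Proof.
rewrite /restr /mmap; apply: eq_bigr => m _.
rewrite /mmap1 mevalX mdegE.
rewrite (eq_bigr (fun i => (w i ^+ m i)%:P * 'X^(m i))); last first.
  by move=> i _; rewrite exprMn rmorphXn.
by rewrite big_split /= -rmorph_prod prodrXr -mul_polyC mulrA -rmorphM mul_polyC.
Qed.

Lemma coef_restr w f d : (restr w f)`_d = (pihomog mdeg d f).@[w].
Proof.
rewrite restrE coef_sum pihomogE rmorph_sum [RHS]big_mkcond /=.
apply: eq_bigr => m _; rewrite coefZ coefXn eq_sym.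
by case: (mdeg m == d); rewrite ?mulr1 ?mulr0 ?mevalZ.
Qed.

Lemma restr_homog w p d : p \is d.-homog -> restr w p = p.@[w] *: 'X^d.
Proof.
move/dhomogP=> homp; rewrite restrE mevalE scaler_suml !big_seq.
by apply: eq_bigr => m /homp <-; rewrite mevalX.
Qed.

Lemma meval_dhomog0 w p : p \is 0.-homog -> p.@[w] = \sum_(m <- msupp p) p@_m.
Proof.
move/dhomogP=> homp; rewrite mevalE !big_seq; apply: eq_bigr => m /homp /eqP.
rewrite mdeg_eq0 => /eqP ->; rewrite big1 ?mulr1 // => i _.
by rewrite mnm0E expr0.
Qed.

End Restriction.

Section HomogeneousForms.
Variables (F : fieldType) (k : nat).

Lemma meval_mpolyE (f : {mpoly F[k]}) w :
  f.@[w] = \sum_(m <- msupp f) f@_m * ('X_[m]).@[w].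
Proof. by rewrite mevalE; apply: eq_bigr => m _; rewrite mevalX. Qed.

Definition homog_of d (c : 'X_{1..k < d.+1} -> F) : {mpoly F[k]} :=
  \sum_(b : 'X_{1..k < d.+1} | mdeg b == d) c b *: 'X_[b].
Arguments homog_of : clear implicits.

Lemma homog_of_homog d c : homog_of d c \is d.-homog.
Proof.
apply: rpred_sum => b /eqP degb; apply/rpredZ/dhomogP => m.
by rewrite msuppX inE => /eqP ->.
Qed.

Lemma meval_homog_of d c w :
  (homog_of d c).@[w] =
  \sum_(b : 'X_{1..k < d.+1} | mdeg b == d) c b * ('X_[b]).@[w].
Proof. by rewrite rmorph_sum /=; apply: eq_bigr => b _; rewrite mevalZ. Qed.

Lemma mcoeff_homog_of d c (b : 'X_{1..k < d.+1}) :
  (homog_of d c)@_b = if mdeg b == d then c b else 0.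
Proof.
rewrite raddf_sum /=; have [degb|degb] := eqVneq (mdeg b) d.
  rewrite (bigD1 b) ?degb //= big1 ?addr0 => [|b' /andP [_ neb]].
    by rewrite mcoeffZ mcoeffX eqxx mulr1.
  by rewrite mcoeffZ mcoeffX (inj_eq val_inj) (negbTE neb) mulr0.
rewrite big1 // => b' /eqP degb'.
rewrite mcoeffZ mcoeffX (inj_eq val_inj).
have [eqb|] := eqVneq b' b; last by rewrite mulr0.
by move: degb; rewrite -eqb degb' eqxx.
Qed.

Lemma sum_msupp_bmnm N (g : {mpoly F[k]}) (phi : 'X_{1..k} -> F) :
  {in msupp g, forall a, mdeg a < N}%N ->
  \sum_(a <- msupp g) g@_a * phi a = \sum_(b : 'X_{1..k < N}) g@_b * phi b.
Proof.
move=> degg; pose I : subFinType _ := 'X_{1..k < N}.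
rewrite (ssrcomplements.big_mksub I) ?msupp_uniq //=.
by rewrite big_rmcond //= => b /memN_msupp_eq0 ->; rewrite mul0r.
Qed.

End HomogeneousForms.

Arguments homog_of {F k} d c.

Section PointDuality.
Variables (F : fieldType) (k n : nat) (v : 'I_n -> 'I_k -> F).

Lemma homog_interp d (w : 'I_n -> F) :
    (forall x : 'I_n -> F,
      (forall f, f \is d.-homog -> \sum_i x i * f.@[v i] = 0) ->
      \sum_i x i * w i = 0) ->
  exists2 f : {mpoly F[k]}, f \is d.-homog & forall i, f.@[v i] = w i.
Proof.
move=> orth_w.
pose A (b : 'X_{1..k < d.+1}) i := if mdeg b == d then ('X_[b]).@[v i] else 0.
have [|c defw] := @lin_comb_of_ker_orth _ _ _ A w.
  move=> x kerx; rewrite -[RHS](orth_w x) => [|f /dhomogP homf].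
    by apply: eq_bigr => i _; rewrite mulrC.
  under eq_bigr do rewrite meval_mpolyE mulr_sumr.
  rewrite exchange_big big_seq big1 //= => m /[dup] /homf degm suppm.
  have ltm : (mdeg m < d.+1)%N by rewrite degm.
  have := kerx (BMultinom ltm); rewrite /A /= degm eqxx => {}kerx.
  rewrite (eq_bigr (fun i => f@_m * (('X_[m]).@[v i] * x i))) => [|i _].
    by rewrite -mulr_sumr kerx mulr0.
  by rewrite mulrCA [x i * _]mulrC.
exists (homog_of d c); first exact: homog_of_homog.
move=> i; rewrite meval_homog_of defw big_mkcond; apply: eq_bigr => b _.
by rewrite /A; case: ifP; rewrite ?mulr0.
Qed.

Lemma homog_functional d (lam : 'X_{1..k} -> F) :
    (forall g : {mpoly F[k]}, g \is d.-homog -> (forall i, g.@[v i] = 0) ->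
      \sum_(a <- msupp g) g@_a * lam a = 0) ->
  exists w : 'I_n -> F,
    forall m, mdeg m = d -> lam m = \sum_i w i * ('X_[m]).@[v i].
Proof.
move=> kills_lam.
pose A i (b : 'X_{1..k < d.+1}) := if mdeg b == d then ('X_[b]).@[v i] else 0.
pose u (b : 'X_{1..k < d.+1}) := if mdeg b == d then lam b else 0.
have [|w defu] := @lin_comb_of_ker_orth _ _ _ A u.
  move=> c kerc; have homg := homog_of_homog c.
  transitivity (\sum_(a <- msupp (homog_of d c)) (homog_of d c)@_a * lam a).
    rewrite (sum_msupp_bmnm (N := d.+1)) => [|a /(dhomog_mf homg) -> //].
    apply: eq_bigr => b _; rewrite mcoeff_homog_of /u.
    by case: ifP; rewrite ?mulr0 ?mul0r // mulrC.
  apply: kills_lam homg _ => i; rewrite meval_homog_of -[RHS](kerc i) big_mkcond.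
  by apply: eq_bigr => b _; rewrite /A; case: ifP; rewrite ?mul0r ?mulr0 // mulrC.
exists w => m degm; have ltm : (mdeg m < d.+1)%N by rewrite degm.
by have := defu (BMultinom ltm); rewrite /u /A /= degm eqxx => ->.
Qed.

End PointDuality.

Lemma drop_polyXM (R : nzRingType) s (q : {poly R}) : (0 < s)%N ->
  drop_poly s ('X * q) = 'X * drop_poly s q + (q`_s.-1)%:P.
Proof.
move=> s_gt0; apply/polyP => i; rewrite coefD coefC !coef_drop_poly !coefXM.
case: i => [|i] /=; first by rewrite add0n add0r eqn0Ngt s_gt0.
by rewrite coef_drop_poly addr0.
Qed.

Section Points.
Variables (F : finFieldType) (k n : nat) (v : 'I_n -> 'I_k -> F).

Lemma in_IX_restr f : in_IX v f <-> forall i, restr (v i) f = 0.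
Proof.
split=> [vanf i|vanf d i]; first by apply/polyP => d; rewrite coef_restr vanf coef0.
by rewrite /hcomp -coef_restr vanf coef0.
Qed.

Lemma dimR_full0 : dimR_full v 0 -> (n <= 1)%N.
Proof.
move=> full0; rewrite leqNgt; apply/negP => n_gt1.
pose i0 : 'I_n := Ordinal (ltnW n_gt1); pose i1 : 'I_n := Ordinal n_gt1.
have [g homg gv] := full0 (fun j => (j == i0)%:R).
have := meval_dhomog0 (v i1) homg; rewrite -(meval_dhomog0 (v i0) homg) !gv eqxx.
by move/eqP; rewrite eq_sym oner_eq0.
Qed.

Lemma inD_contract_PhiX f d : inD (contract f (PhiX v d)).
Proof.
exists (map val (enum {: 'X_{1..k < d.+1}})) => m nz_m.
have lt_md : (mdeg m < d.+1)%N.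
  rewrite ltnNge; apply: contraNN nz_m => lt_dm.
  rewrite /contract big1 // => a _.
  by rewrite /PhiX mdegD gtn_eqF ?mulr0 // ltn_addl.
by apply/mapP; exists (BMultinom lt_md); rewrite ?mem_enum.
Qed.

Variables (L : {mpoly F[k]}) (r : nat) (sep : 'I_n -> {mpoly F[k]}).
Hypothesis homL : L \is 1.-homog.
Hypothesis Lv1 : forall i, L.@[v i] = 1.
Hypothesis homsep : forall i, sep i \is r.-homog.
Hypothesis sepv : forall i j, (sep i).@[v j] = (i == j)%:R.

Lemma restr_L i : restr (v i) L = 'X.
Proof. by rewrite (restr_homog _ homL) Lv1 scale1r. Qed.

Lemma restr_sep i j : restr (v j) (sep i) = (i == j)%:R *: 'X^r.
Proof. by rewrite (restr_homog _ (homsep i)) sepv. Qed.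

Lemma restr_evalL i q : restr (v i) (evalL L q) = q.
Proof.
rewrite /evalL rmorph_sum /= -[RHS]coefK poly_def; apply: eq_bigr => j _.
by rewrite restrZ rmorphXn /= restr_L.
Qed.

Lemma meval_LXnM a f i : (L ^+ a * f).@[v i] = f.@[v i].
Proof. by rewrite mevalM rmorphXn /= Lv1 expr1n mul1r. Qed.

Lemma homog_LXnM a d f : f \is d.-homog -> L ^+ a * f \is (a + d).-homog.
Proof. by move=> homf; have := dhomogM (dhomogMn a homL) homf; rewrite mul1n. Qed.

Lemma dimR_full_ge d e : dimR_full v d -> (d <= e)%N -> dimR_full v e.
Proof.
move=> full_d le_de w; have [g homg gw] := full_d w.
exists (L ^+ (e - d) * g); first by rewrite -{2}(subnK le_de) homog_LXnM.
by move=> j; rewrite meval_LXnM.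
Qed.

Lemma in_IX_sep_interp z : z \is r.-homog -> in_IX v (z - \sum_i z.@[v i] *: sep i).
Proof.
move=> homz; apply/in_IX_restr => j; rewrite rmorphB rmorph_sum /= (restr_homog _ homz).
rewrite (bigD1 j) //= big1 => [|i /negbTE neij]; last first.
  by rewrite restrZ restr_sep neij scale0r scaler0.
by rewrite restrZ restr_sep eqxx scale1r addr0 subrr.
Qed.

Section FlHom.
Variable psi : {mpoly F[k]} -> {poly F}.
Hypothesis hompsi : is_FlHom v L psi.

Lemma FlHomD f g : psi (f + g) = psi f + psi g.
Proof. by case: hompsi. Qed.

Lemma FlHomZ c f : psi (c *: f) = c *: psi f.
Proof. by case: hompsi. Qed.

Lemma FlHom0 : psi 0 = 0.
Proof. by have := FlHomZ 0 0; rewrite !scale0r. Qed.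

Lemma FlHom_sum (I : Type) (s : seq I) (f : I -> {mpoly F[k]}) :
  psi (\sum_(i <- s) f i) = \sum_(i <- s) psi (f i).
Proof. exact: (big_morph psi FlHomD FlHom0). Qed.

Lemma FlHom_LXnM a f : psi (L ^+ a * f) = 'X^a * psi f.
Proof.
elim: a => [|a IHa]; first by rewrite !expr0 !mul1r.
by case: hompsi => _ _ psiL _; rewrite exprS -mulrA psiL IHa mulrA -exprS.
Qed.

Lemma FlHom_homog z : z \is r.-homog -> psi z = \sum_i z.@[v i] *: psi (sep i).
Proof.
move=> /in_IX_sep_interp; case: hompsi => _ _ _ psiIX /psiIX psi_diff.
transitivity (psi ((z - \sum_i z.@[v i] *: sep i) + \sum_i z.@[v i] *: sep i)).
  by rewrite subrK.
by rewrite FlHomD psi_diff add0r FlHom_sum; under eq_bigr do rewrite FlHomZ.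
Qed.

Lemma FlHom_sep_orth u d : (d < r)%N -> u \is d.-homog ->
  \sum_i u.@[v i] * (psi (sep i))`_(r.-1 - d) = 0.
Proof.
move=> lt_dr homu; have homLu : L ^+ (r - d) * u \is r.-homog.
  by rewrite -{2}(subnKC (ltnW lt_dr)) addnC homog_LXnM.
have := congr1 (fun p : {poly F} => p`_(r.-1 - d)) (FlHom_homog homLu).
rewrite /= FlHom_LXnM coefXnM ifT; last by lia.
rewrite coef_sum => vanish; rewrite [RHS]vanish.
by apply: eq_bigr => i _; rewrite coefZ meval_LXnM.
Qed.

End FlHom.

Lemma is_FlHom_mulXn psi o :
  is_FlHom v L psi -> is_FlHom v L (fun f => 'X^o * psi f).
Proof.
case=> psiD psiZ psiL psiIX; split=> [f g|c f|f|f /psiIX ->].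
- by rewrite psiD mulrDr.
- by rewrite psiZ scalerAr.
- by rewrite psiL mulrCA.
- by rewrite mulr0.
Qed.

Definition drop_hom (x : 'I_n -> F) s f : {poly F} :=
  \sum_i x i *: drop_poly s (restr (v i) f).

Lemma is_FlHom_drop_hom x s :
    ((0 < s)%N -> forall f, f \is s.-1.-homog -> \sum_i x i * f.@[v i] = 0) ->
  is_FlHom v L (drop_hom x s).
Proof.
move=> orth_x; split=> [f g|c f|f|f /in_IX_restr vanf].
- by rewrite -big_split; apply: eq_bigr => i _; rewrite rmorphD linearD scalerDr.
- rewrite scaler_sumr; apply: eq_bigr => i _.
  by rewrite restrZ linearZ /= !scalerA mulrC.
- rewrite /drop_hom mulr_sumr; have [->|s_gt0] := posnP s.
    by apply: eq_bigr => i _; rewrite !drop_poly0l rmorphM /= restr_L scalerAr.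
  under eq_bigr do rewrite rmorphM /= restr_L drop_polyXM // scalerDr scalerAr.
  rewrite big_split /= -[RHS]addr0; congr (_ + _).
  transitivity ((\sum_i x i * (pihomog mdeg s.-1 f).@[v i])%:P).
    rewrite rmorph_sum; apply: eq_bigr => i _.
    by rewrite -mul_polyC -rmorphM coef_restr.
  by rewrite orth_x ?pihomogP.
- by rewrite /drop_hom big1 // => i _; rewrite vanf linear0 scaler0.
Qed.

Lemma in_JhatP g :
  in_Jhat v L sep g <->
  exists2 psi, is_FlHom v L psi & forall i, restr (v i) g = psi (sep i) * 'X^r.
Proof.
have restr_sum psi j : restr (v j) (\sum_i evalL L (psi (sep i)) * sep i) =
                       psi (sep j) * 'X^r.
  rewrite rmorph_sum /= (bigD1 j) //= big1 => [|i /negbTE neij].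
    by rewrite rmorphM /= restr_evalL restr_sep eqxx scale1r addr0.
  by rewrite rmorphM /= restr_sep neij scale0r mulr0.
split=> [[psi hompsi /in_IX_restr vang]|[psi hompsi restr_g]].
  exists psi => // i; apply/eqP.
  by have /eqP := vang i; rewrite rmorphB /= restr_sum subr_eq0.
exists psi => //; apply/in_IX_restr => i.
by rewrite rmorphB /= restr_sum restr_g subrr.
Qed.

Lemma in_IX_Jhat g : in_IX v g -> in_Jhat v L sep g.
Proof.
move=> /in_IX_restr vang; apply/in_JhatP; exists (fun _ => 0).
  by split=> *; rewrite ?addr0 ?scaler0 ?mulr0.
by move=> i; rewrite vang mul0r.
Qed.

(* The witness is psi f = t^(e+s-2r) sum_i g(v_i) (f(t v_i) div t^s), for which
   psi (sep_i) = g(v_i) t^(e-r). *)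
Lemma in_Jhat_homog g e s : (s <= r)%N -> (2 * r <= e + s)%N -> g \is e.-homog ->
    ((0 < s)%N -> forall f, f \is s.-1.-homog -> \sum_i g.@[v i] * f.@[v i] = 0) ->
  in_Jhat v L sep g.
Proof.
move=> le_sr le_2r_es homg orth_g; apply/in_JhatP.
pose o := (e + s - 2 * r)%N.
exists (fun f => 'X^o * drop_hom (fun i => g.@[v i]) s f).
  exact/is_FlHom_mulXn/is_FlHom_drop_hom.
move=> j; rewrite (restr_homog _ homg) /drop_hom (bigD1 j) //=.
rewrite big1 => [|i /negbTE neij].
  rewrite restr_sep eqxx scale1r addr0 -[X in drop_poly _ X]mul1r drop_polyMXn.
  rewrite (_ : s - r = 0)%N ?drop_poly0l; last by lia.
  by rewrite mul1r -scalerAr -scalerAl -!exprD; congr (_ *: 'X^_); lia.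
by rewrite restr_sep eq_sym neij scale0r linear0 scaler0.
Qed.

Local Notation D := (2 * r).-1.

Lemma in_Jhat_top_degree g : (0 < r)%N -> g \is D.-homog ->
  in_Jhat v L sep g <-> \sum_i g.@[v i] = 0.
Proof.
move=> r_gt0 homg; split=> [/in_JhatP [psi hompsi restr_g]|sum_g0].
  have val_g i : g.@[v i] = (psi (sep i))`_r.-1.
    have := congr1 (fun p : {poly F} => p`_D) (restr_g i).
    rewrite /= (restr_homog _ homg) coefZ coefXn eqxx mulr1 coefMXn ifF; last by lia.
    by rewrite (_ : D - r = r.-1)%N //; lia.
  rewrite -[RHS](FlHom_sep_orth hompsi r_gt0 (dhomog1 _ _)).
  by apply: eq_bigr => i _; rewrite meval1 mul1r subn0 val_g.
apply: (@in_Jhat_homog _ D 1) => //; try lia.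
move=> _ f homf; under eq_bigr do rewrite (meval_dhomog0 _ homf).
by rewrite -mulr_suml sum_g0 mul0r.
Qed.

Definition Phi_form g : F := \sum_i (restr (v i) g)`_D.

Lemma Phi_formD f g : Phi_form (f + g) = Phi_form f + Phi_form g.
Proof. by rewrite -big_split; apply: eq_bigr => i _; rewrite rmorphD coefD. Qed.

Lemma Phi_formZ c f : Phi_form (c *: f) = c * Phi_form f.
Proof. by rewrite mulr_sumr; apply: eq_bigr => i _; rewrite restrZ coefZ. Qed.

Lemma Phi_form_sum (I : Type) (s : seq I) (h : I -> {mpoly F[k]}) :
  Phi_form (\sum_(i <- s) h i) = \sum_(i <- s) Phi_form (h i).
Proof.
have Phi_form0 : Phi_form 0 = 0 by rewrite -(scale0r 0) Phi_formZ mul0r.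
exact: (big_morph Phi_form Phi_formD Phi_form0).
Qed.

Lemma Phi_form_homog g e :
  g \is e.-homog -> Phi_form g = (e == D)%:R * \sum_i g.@[v i].
Proof.
move=> homg; rewrite mulr_sumr; apply: eq_bigr => i _.
by rewrite (restr_homog _ homg) coefZ coefXn eq_sym mulrC.
Qed.

Lemma PhiX_Phi_form m : PhiX v D m = Phi_form 'X_[m].
Proof.
have homX : ('X_[m] : {mpoly F[k]}) \is (mdeg m).-homog by rewrite dhomogX.
by rewrite (Phi_form_homog homX) /PhiX; case: eqP; rewrite ?mul1r ?mul0r.
Qed.

Lemma contract_PhiX f m : contract f (PhiX v D) m = Phi_form ('X_[m] * f).
Proof.
rewrite /contract {3}(mpolyE f) mulr_sumr Phi_form_sum; apply: eq_bigr => a _.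
by rewrite PhiX_Phi_form -scalerAr Phi_formZ -mpolyXD addmC.
Qed.

Lemma contract_contract_PhiX f' f m :
  contract f' (contract f (PhiX v D)) m = Phi_form (f' * ('X_[m] * f)).
Proof.
rewrite /contract {3}(mpolyE f') mulr_suml Phi_form_sum; apply: eq_bigr => a _.
rewrite -/(contract f (PhiX v D) (a + m)) contract_PhiX -scalerAl Phi_formZ.
by rewrite mpolyXD mulrA.
Qed.

Lemma Phi_form_Jhat f u : (0 < r)%N -> in_Jhat v L sep f -> Phi_form (f * u) = 0.
Proof.
move=> r_gt0 /in_JhatP [psi hompsi restr_f].
have D_lt_r : (D < r)%N = false by lia.
rewrite /Phi_form.
under eq_bigr do rewrite rmorphM /= restr_f mulrAC coefMXn D_lt_r coefMr.
rewrite (_ : D - r = r.-1)%N ?prednK //; last lia.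
rewrite exchange_big /= big1 // => j _.
rewrite -[RHS](FlHom_sep_orth hompsi (ltn_ord j) (pihomogP _ _ u)).
by apply: eq_bigr => i _; rewrite coef_restr mulrC.
Qed.

Lemma Jhat_perp_contract_PhiX f : (0 < r)%N -> forall f',
  in_Jhat v L sep f' -> forall m, contract f' (contract f (PhiX v D)) m = 0.
Proof. by move=> r_gt0 f' Jf' m; rewrite contract_contract_PhiX Phi_form_Jhat. Qed.

Lemma PhiX_neq0 : (0 < n)%N -> (0 < r)%N -> dimR_full v r ->
  exists alpha, PhiX v D alpha != 0.
Proof.
move=> n_gt0 r_gt0 full_r; pose i0 : 'I_n := Ordinal n_gt0.
have [|g homg gv] := dimR_full_ge full_r (_ : r <= D)%N (fun j => (j == i0)%:R).
  by lia.
have Phi_g : contract g (PhiX v D) 0%MM = 1.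
  rewrite contract_PhiX mpolyX0 mul1r (Phi_form_homog homg) eqxx mul1r.
  by rewrite (bigD1 i0) //= big1 => [|j /negbTE nej]; rewrite gv ?eqxx ?addr0 ?nej.
have /hasP [a _ nz_a] : has (fun a => PhiX v D a != 0) (msupp g); last by exists a.
apply: contraT => /hasPn Phi_g0; rewrite -(oner_eq0 F) -Phi_g /contract big_seq.
by rewrite big1 // => a /Phi_g0 /negPn /eqP Phi_a; rewrite addm0 Phi_a mulr0.
Qed.

Section JhatPerp.
Hypothesis full_r : dimR_full v r.
Variable psi : 'X_{1..k} -> F.
Hypothesis psi_perp : forall f, in_Jhat v L sep f -> forall m, contract f psi m = 0.

Lemma Jhat_perp_msupp f :
  in_Jhat v L sep f -> \sum_(a <- msupp f) f@_a * psi a = 0.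
Proof.
move=> Jf; rewrite -[RHS](psi_perp Jf 0%MM).
by apply: eq_bigr => a _; rewrite addm0.
Qed.

Lemma Jhat_perp_high m : (2 * r <= mdeg m)%N -> psi m = 0.
Proof.
move=> le_2r_m; have XJ : in_Jhat v L sep 'X_[m].
  by apply: (@in_Jhat_homog _ (mdeg m) 0) => //; rewrite ?addn0 ?dhomogX.
by have := Jhat_perp_msupp XJ; rewrite msuppX big_seq1 mcoeffX eqxx mul1r.
Qed.

Lemma Jhat_perp_values j : exists w : 'I_n -> F,
  forall m, mdeg m = j -> psi m = \sum_i w i * ('X_[m]).@[v i].
Proof.
apply: homog_functional => g homg vang; apply/Jhat_perp_msupp/in_IX_Jhat.
by apply/in_IX_restr => i; rewrite (restr_homog _ homg) vang scale0r.
Qed.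

Lemma Jhat_perp_degree j : (j < 2 * r)%N ->
  exists2 fj : {mpoly F[k]}, fj \is (D - j).-homog &
    forall m, mdeg m = j -> psi m = \sum_i ('X_[m]).@[v i] * fj.@[v i].
Proof.
move=> lt_j2r; have [w defpsi] := Jhat_perp_values j.
suff [fj homfj fjv] :
    exists2 fj : {mpoly F[k]}, fj \is (D - j).-homog & forall i, fj.@[v i] = w i.
  exists fj => // m degm; rewrite defpsi //.
  by apply: eq_bigr => i _; rewrite fjv mulrC.
have [lt_jr|le_rj] := ltnP j r.
  by apply: (dimR_full_ge full_r); lia.
(* Now D - j < r: a j-form whose values are orthogonal to all (D-j)-forms lies
   in J-hat, so psi kills it. *)
apply: homog_interp => x orth_x; have [g homg gx] := dimR_full_ge full_r le_rj x.
have gJ : in_Jhat v L sep g.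
  apply: (@in_Jhat_homog _ j (D - j).+1) => //; try lia.
  move=> _ f homf; rewrite -[RHS](orth_x f homf).
  by apply: eq_bigr => i _; rewrite gx.
rewrite -[RHS](Jhat_perp_msupp gJ).
transitivity (\sum_(a <- msupp g) \sum_i w i * (g@_a * ('X_[a]).@[v i])).
  rewrite exchange_big /=; apply: eq_bigr => i _.
  by rewrite -gx meval_mpolyE mulrC mulr_sumr.
apply: eq_big_seq => a suppa; rewrite defpsi ?(dhomog_mf homg suppa) // mulr_sumr.
by apply: eq_bigr => i _; rewrite mulrCA.
Qed.

Lemma Jhat_perp_PhiX : exists f, forall m, psi m = contract f (PhiX v D) m.
Proof.
have [fj homfj defpsi] :=
  fin_all_exists2 (fun j : 'I_(2 * r) => Jhat_perp_degree (ltn_ord j)).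
exists (\sum_j fj j) => m; rewrite contract_PhiX mulr_sumr Phi_form_sum.
have homXf j : 'X_[m] * fj j \is (mdeg m + (D - j)).-homog.
  by rewrite dhomogM ?dhomogX.
under eq_bigr do rewrite (Phi_form_homog (homXf _)).
have [lt_m2r|le_2r_m] := ltnP (mdeg m) (2 * r); last first.
  rewrite Jhat_perp_high // big1 // => j _.
  by rewrite (_ : _ == _ = false) ?mul0r //; apply/negbTE/eqP; have := ltn_ord j; lia.
rewrite (bigD1 (Ordinal lt_m2r)) //= [X in _ + X]big1 => [|j]; last first.
  rewrite -val_eqE /= => nej; rewrite (_ : _ == _ = false) ?mul0r //.
  by apply/negbTE/eqP; have := ltn_ord j; lia.
rewrite (_ : _ == _ = true) ?mul1r ?addr0; last by apply/eqP; lia.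
by rewrite (defpsi (Ordinal lt_m2r) m) //; apply: eq_bigr => i _; rewrite mevalM.
Qed.

End JhatPerp.

End Points.

Theorem theorem7p5 (F : finFieldType) (k n : nat) (v : 'I_n -> 'I_k -> F)
    (L : {mpoly F[k]}) (r : nat) (sep : 'I_n -> {mpoly F[k]}) :
  (2 <= n)%N ->
  injective v ->
  L \is 1.-homog ->
  (forall i, L.@[v i] = 1) ->
  dimR_full v r -> (forall d, dimR_full v d -> (r <= d)%N) ->
  (forall i, sep i \is r.-homog) ->
  (forall i j, (sep i).@[v j] = (i == j)%:R) ->
  (forall g : {mpoly F[k]}, g \is (2 * r).-1.-homog ->
     (in_Jhat v L sep g <-> \sum_(i < n) g.@[v i] = 0))
  /\
  (exists alpha, PhiX v (2 * r).-1 alpha != 0) /\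
  (forall psi : 'X_{1..k} -> F,
     (inD psi /\ forall f, in_Jhat v L sep f -> forall m, contract f psi m = 0)
     <-> exists f : {mpoly F[k]}, forall m, psi m = contract f (PhiX v (2 * r).-1) m).
Proof.
move=> n_gt1 _ homL Lv1 full_r _ homsep sepv.
have r_gt0 : (0 < r)%N.
  rewrite lt0n; apply: contraTneq n_gt1 => r0; rewrite -leqNgt.
  by apply: (@dimR_full0 _ _ _ v); rewrite -r0.
split; first by move=> g; apply: in_Jhat_top_degree.
split; first exact: PhiX_neq0 homL Lv1 (ltnW n_gt1) r_gt0 full_r.
move=> psi; split=> [[_ psi_perp]|[f defpsi]].
  exact: Jhat_perp_PhiX homL Lv1 homsep sepv full_r psi psi_perp.
split=> [|f' Jf' m].
  have [s supp_s] := inD_contract_PhiX v f (2 * r).-1.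
  by exists s => m; rewrite defpsi; apply: supp_s.
rewrite -[RHS](Jhat_perp_contract_PhiX homL Lv1 homsep sepv f r_gt0 Jf' m).
by apply: eq_bigr => a _; rewrite defpsi.
Qed.
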